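(* Let $\mu$ be a distribution on $\{0,1\}^{\mathbb{N}}$ and let $X=(X_i)_{i\in\mathbb{N}}\sim\mu$ be defined on a probability space $(\Omega,\mathcal{F},\mathbb{P})$. Then $\mu$ satisfies condition (SC) if and only if it satisfies condition (SC'), where: (SC): $(\mathbb{N},\xi)$ is totally bounded and there exists $K\ge1$ such that for every $\varepsilon>0$ there exist events $(E_k)_{k\in\mathbb{N}}$ in $\mathcal{F}$ and a finite set $J\subset\mathbb{N}$ with (1) $\mathbb{P}(E_k)\le\varepsilon$ for all $k$; (2) $\sup_{k}\frac{\log(k+1)}{\log(1/\mathbb{P}(E_k))}<\infty$; (3) for every $i\in\mathbb{N}$ there exist $j\in J$ and $\mathcal{K}\subset\mathbb{N}$ with $|\mathcal{K}|\le K$ and $\{X_i\neq X_j\}\subset\bigcup_{k\in\mathcal{K}}E_k$. (SC'): $(\mathbb{N},\xi)$ is totally bounded and there exists $K\ge1$ such that for every $\varepsilon>0$ there exist events $(E_k)_{k\in\mathbb{N}}$ in $\mathcal{F}$ and a finite sequence of random variables $(Z_j)_{j\in[J]}$ on $(\Omega,\mathcal{F},\mathbb{P})$ with (1) $\mathbb{P}(E_k)\le\varepsilon$ for all $k$; (2) $\sup_{k}\frac{\log(k+1)}{\log(1/\mathbb{P}(E_k))}<\infty$; (3) for every $i\in\mathbb{N}$ there exist $j\in[J]$ and $\mathcal{K}\subset\mathbb{N}$ with $|\mathcal{K}|\le K$ and $\{X_i\neq Z_j\}\subset\bigcup_{k\in\mathcal{K}}E_k$.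
   Context: $\xi(i,j):=\mathbb{P}(X_i\neq X_j)$; $(\mathbb{N},\xi)$ is totally bounded if for every $\varepsilon>0$ there is a finite $S\subset\mathbb{N}$ such that every $i$ has $s\in S$ with $\xi(i,s)\le\varepsilon$. $[J]=\{1,\dots,J\}$; $\log(1/0)=\infty$. *)

From HB Require Import structures.
From mathcomp Require Import all_boot all_order all_algebra finmap.
From mathcomp Require Import all_classical all_reals all_analysis.
Set Implicit Arguments. Unset Strict Implicit. Unset Printing Implicit Defensive.
Import Order.TTheory GRing.Theory Num.Theory.
Local Open Scope classical_set_scope.
Local Open Scope ring_scope.
Local Open Scope ereal_scope.

Definition xi d (T : measurableType d) (R : realType) (P : probability T R)
  (X : nat -> T -> bool) (i j : nat) : \bar R :=
  P [set w | X i w != X j w].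

Definition totally_bounded_xi d (T : measurableType d) (R : realType)
  (P : probability T R) (X : nat -> T -> bool) : Prop :=
  forall eps : R, (0 < eps)%R ->
    exists S : {fset nat}, forall i : nat,
      exists2 s, s \in S & xi P X i s <= eps%:E.

(* log(k+1)/log(1/p), with log(1/0) = +oo (so the ratio is 0 when p = 0),
   and extended-real division (x/0 = +oo for x > 0, 0/0 = 0) when p = 1. *)
Definition log_ratio (R : realType) (k : nat) (p : R) : \bar R :=
  if p == 0%R then 0
  else (ln (k.+1%:R : R))%:E * ((ln (p^-1))%:E)^-1.

Definition good_events d (T : measurableType d) (R : realType)
  (P : probability T R) (eps : R) (E : nat -> set T) : Prop :=
  (forall k, measurable (E k)) /\
  (forall k, P (E k) <= eps%:E) /\
  ereal_sup (range (fun k => log_ratio k (fine (P (E k))))) < +oo.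

Definition SC d (T : measurableType d) (R : realType)
  (P : probability T R) (X : nat -> T -> bool) : Prop :=
  totally_bounded_xi P X /\
  exists K : nat, (1 <= K)%N /\
    forall eps : R, (0 < eps)%R ->
      exists (E : nat -> set T) (J : {fset nat}),
        good_events P eps E /\
        forall i : nat, exists2 j, j \in J &
          exists Ks : {fset nat}, (#|` Ks| <= K)%N /\
            [set w | X i w != X j w] `<=` \bigcup_(k in [set` Ks]) E k.

Definition SC' d (T : measurableType d) (R : realType)
  (P : probability T R) (X : nat -> T -> bool) : Prop :=
  totally_bounded_xi P X /\
  exists K : nat, (1 <= K)%N /\
    forall eps : R, (0 < eps)%R ->
      exists (E : nat -> set T) (J : nat) (Z : 'I_J -> T -> bool),
        (forall j, measurable_fun setT (Z j)) /\
        good_events P eps E /\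
        forall i : nat, exists j : 'I_J,
          exists Ks : {fset nat}, (#|` Ks| <= K)%N /\
            [set w | X i w != Z j w] `<=` \bigcup_(k in [set` Ks]) E k.

From HB Require Import structures.
From mathcomp Require Import all_boot all_order all_algebra finmap.
From mathcomp Require Import all_classical all_reals all_analysis.
Set Implicit Arguments. Unset Strict Implicit. Unset Printing Implicit Defensive.
Local Open Scope classical_set_scope.

(* The two conditions differ only in the centres of the covering. A finite
   set J of indices gives the centres Z_j := X_j, j in J. Conversely, pick for
   every centre Z_j some X_(f j) that is covered around Z_j, if there is one;
   since {X_i <> X_(f j)} is contained in {X_i <> Z_j} u {X_(f j) <> Z_j}, the
   indices f j serve as centres once K is replaced by 2K. *)

Definition covered_by (I : choiceType) T (E : I -> set T) (K : nat)
    (A : set T) : Prop :=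
  exists Ks : {fset I}, (#|` Ks| <= K)%N /\
    A `<=` \bigcup_(k in [set` Ks]) E k.

Lemma sub_covered_by (I : choiceType) T (E : I -> set T) K (A B : set T) :
  A `<=` B -> covered_by E K B -> covered_by E K A.
Proof. by move=> AB [Ks [cardKs BE]]; exists Ks; split=> // w /AB /BE. Qed.

Lemma covered_byU (I : choiceType) T (E : I -> set T) K1 K2 (A B : set T) :
  covered_by E K1 A -> covered_by E K2 B -> covered_by E (K1 + K2) (A `|` B).
Proof.
move=> [Ks1 [cardKs1 AE]] [Ks2 [cardKs2 BE]]; exists (Ks1 `|` Ks2)%fset; split.
  exact: leq_trans (leq_card_fsetU _ _) (leq_add cardKs1 cardKs2).
move=> w [/AE|/BE] [k Ksk Ekw]; exists k => //=; rewrite inE.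
- by rewrite Ksk.
- by rewrite Ksk orbT.
Qed.

Lemma neq_subsetU T (U : eqType) (x y z : T -> U) :
  [set w | x w != y w] `<=` [set w | x w != z w] `|` [set w | y w != z w].
Proof.
move=> w /= xy; case: (eqVneq (x w) (z w)) => [xz|]; last by left.
by right; rewrite -xz eq_sym.
Qed.

Lemma exists_nth_fset (I : choiceType) (x0 : I) (J : {fset I}) (Q : I -> Prop) :
  (exists2 j, j \in J & Q j) -> exists j : 'I_(size J), Q (nth x0 J j).
Proof.
move=> [j jJ Qj]; have jJ_lt : (index j J < size J)%N by rewrite index_mem.
by exists (Ordinal jJ_lt); rewrite nth_index.
Qed.

Lemma representative_choice (A B : Type) (a0 : A) (Q : A -> B -> Prop) :
  exists f : B -> A, forall b a, Q a b -> Q (f b) b.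
Proof.
have /choice[f fP] : forall b, exists a, (exists a', Q a' b) -> Q a b.
  move=> b; have [[a Qab]|noQ] := pselect (exists a, Q a b); first by exists a.
  by exists a0 => /noQ.
by exists f => b a Qab; apply: fP; exists a.
Qed.

Section SC_equivalence.
Variables (d : measure_display) (T : measurableType d) (R : realType).
Variables (P : probability T R) (X : nat -> T -> bool).

Lemma SC_SC' : (forall i, measurable_fun setT (X i)) -> SC P X -> SC' P X.
Proof.
move=> mX [tbX [K [K_ge1 coverX]]]; split=> //; exists K; split=> // eps eps_gt0.
have [E [J [goodE coverJ]]] := coverX eps eps_gt0.
exists E, (size J), (fun j => X (nth 0%N J j)).
split; first by move=> j; exact: mX.
split=> // i.
exact: exists_nth_fset (coverJ i).
Qed.

Lemma SC'_SC : SC' P X -> SC P X.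
Proof.
move=> [tbX [K [K_ge1 coverZ]]]; split=> //; exists (K + K)%N.
split; first exact: leq_trans K_ge1 (leq_addr _ _).
move=> eps eps_gt0; have [E [J [Z [_ [goodE coverZi]]]]] := coverZ eps eps_gt0.
have [f fP] := representative_choice 0%N
  (fun i (j : 'I_J) => covered_by E K [set w | X i w != Z j w]).
exists E, [fset f j | j in 'I_J]%fset; split=> // i.
have [j covij] := coverZi i.
exists (f j); first by rewrite in_imfset.
exact: sub_covered_by (@neq_subsetU _ _ (X i) (X (f j)) (Z j))
  (covered_byU covij (fP _ _ covij)).
Qed.

End SC_equivalence.

Theorem proposition20 (d : measure_display) (T : measurableType d)
  (R : realType) (P : probability T R) (X : nat -> T -> bool)
  (hX : forall i, measurable_fun setT (X i)) :
  SC P X <-> SC' P X.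
Proof. by split; [exact: SC_SC' | exact: SC'_SC]. Qed.
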